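(* Let $n\ge2$. For any $A,B\in\mathbb{R}^{n\times n}$ there exists a nonzero polynomial $P\in\mathbb{Z}\langle X,Y\rangle$ in two non-commuting variables with $P(A,B)=\mathbf{0}$; i.e. no two real $n\times n$ matrices are algebraically independent over $\mathbb{Z}$.
   Context: $\mathbb{Z}\langle X,Y\rangle$ denotes the ring of polynomials in non-commuting variables $X,Y$ with integer coefficients (finite $\mathbb{Z}$-linear combinations of words in $X,Y$); nonzero means nonzero as a formal polynomial. $P(A,B)$ denotes evaluation by substituting matrices (constant term times $I_n$). $A,B$ are algebraically dependent if some nonzero such $P$ has $P(A,B)=\mathbf{0}$, and algebraically independent otherwise. *)

From HB Require Import structures.
From mathcomp Require Import all_boot all_order all_algebra.
From mathcomp Require Import Rstruct.
From Stdlib Require Import Rdefinitions.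
Set Implicit Arguments. Unset Strict Implicit. Unset Printing Implicit Defensive.
Import Order.TTheory GRing.Theory Num.Theory.
Local Open Scope ring_scope.

(* Non-commutative polynomials in X, Y over Z: a finite formal Z-linear
   combination of words; a word is a seq bool with true = X, false = Y. *)
Definition ncpoly := seq (int * seq bool).

Definition nccoef (P : ncpoly) (w : seq bool) : int :=
  \sum_(p <- P | p.2 == w) p.1.

Definition ncpoly_nonzero (P : ncpoly) : Prop := exists w, nccoef P w != 0.

Definition word_eval (K : nzRingType) (n : nat) (A B : 'M[K]_n) (w : seq bool)
  : 'M[K]_n := foldr (fun b M => (if b then A else B) *m M) 1%:M w.

Definition nceval (K : nzRingType) (n : nat) (A B : 'M[K]_n) (P : ncpoly)
  : 'M[K]_n := \sum_(p <- P) (p.1%:~R *: word_eval A B p.2).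

From mathcomp Require Import all_boot all_order all_algebra all_fingroup.
From mathcomp Require Import Rstruct.
From Stdlib Require Import Rdefinitions.
Set Implicit Arguments. Unset Strict Implicit. Unset Printing Implicit Defensive.
Import Order.TTheory GRing.Theory Num.Theory.
Local Open Scope ring_scope.

(* The standard polynomial s_m(x_1, ..., x_m) = sum_s sgn(s) x_s(1) ... x_s(m)
   is multilinear and alternating, so it vanishes on any m > n^2 elements of
   the n^2-dimensional space of n x n matrices.  Substituting x_j = X Y^j turns
   it into an integer polynomial in X, Y whose words X Y^s(1) ... X Y^s(m) are
   pairwise distinct, so it is nonzero as a formal polynomial. *)

Definition standard_eval (K : nzRingType) (V : lalgType K) (m : nat)
    (x : 'I_m -> V) : V :=
  \sum_(s : 'S_m) ((-1) ^+ s : K) *: \prod_(k < m) x (s k).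

Lemma det_rowsub_eq0 (K : fieldType) (p m : nat) (X : 'M[K]_(p, m))
    (g : 'I_m -> 'I_p) :
  (p < m)%nat -> \det (rowsub g X) = 0.
Proof.
move=> ltpm; apply/eqP; apply: contraLR ltpm => det_neq0.
have : row_free (rowsub g X) by rewrite row_free_unit unitmxE unitfE.
rewrite -leqNgt /row_free => /eqP <-.
exact: leq_trans (mxrankS (rowsub_sub g X)) (rank_leq_row X).
Qed.

Lemma standard_eval_mx_eq0 (K : fieldType) (n m : nat) (x : 'I_m -> 'M[K]_n.+1) :
  (n.+1 * n.+1 < m)%nat -> standard_eval x = 0.
Proof.
move=> ltm.
pose X : 'M[K]_(n.+1 * n.+1, m) := \matrix_(a, j) mxvec (x j) 0 a.
pose e a : 'M[K]_n.+1 := vec_mx (delta_mx 0 a).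
have x_coord j : x j = \sum_a X a j *: e a.
  rewrite -{1}(mxvecK (x j)) {1}(row_sum_delta (mxvec (x j))) linear_sum.
  by apply: eq_bigr => a _; rewrite linearZ /= mxE.
have prod_expand s : \prod_(k < m) x (s k) =
    \sum_(g : {ffun 'I_m -> 'I_(n.+1 * n.+1)})
      (\prod_(k < m) X (g k) (s k)) *: \prod_(k < m) e (g k).
  under eq_bigr do rewrite x_coord.
  by rewrite bigA_distr_bigA; apply: eq_bigr => g _; rewrite scaler_prod.
rewrite /standard_eval; under eq_bigr do rewrite prod_expand scaler_sumr.
rewrite exchange_big /=; apply: big1 => g _.
under eq_bigr do rewrite scalerA.
rewrite -scaler_suml.
have -> : \sum_(s : 'S_m) (-1) ^+ s * \prod_(k < m) X (g k) (s k)
          = \det (rowsub g X).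
  by apply: eq_bigr => s _; congr (_ * _); apply: eq_bigr => k _; rewrite !mxE.
by rewrite det_rowsub_eq0 // scale0r.
Qed.

Definition block_word (j : nat) : seq bool := true :: nseq j false.

Definition block_words (s : seq nat) : seq bool := flatten (map block_word s).

Lemma cat_nseq_inj (a b : nat) (u v : seq bool) :
  head true u -> head true v ->
  nseq a false ++ u = nseq b false ++ v -> a = b /\ u = v.
Proof.
elim: a b => [|a IH] [|b] /=.
- by move=> _ _ ->.
- by move=> hu _ eq_uv; rewrite eq_uv in hu.
- by move=> _ hv eq_uv; rewrite -eq_uv in hv.
- by move=> hu hv [] /(IH b hu hv) [-> ->].
Qed.

Lemma block_words_inj : injective block_words.
Proof.
elim=> [|a s IH] [|b t] //= [].
have head_block r : head true (block_words r) by case: r.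
by case/(cat_nseq_inj (head_block s) (head_block t)) => -> /IH ->.
Qed.

Lemma word_eval_cat (K : nzRingType) (n : nat) (A B : 'M[K]_n) (u v : seq bool) :
  word_eval A B (u ++ v) = word_eval A B u *m word_eval A B v.
Proof. by elim: u => [|b u IH] /=; rewrite ?mul1mx // IH mulmxA. Qed.

Lemma word_eval_block_words (K : nzRingType) (n : nat) (A B : 'M[K]_n.+1)
    (s : seq nat) :
  word_eval A B (block_words s) = \prod_(j <- s) word_eval A B (block_word j).
Proof.
elim: s => [|a s IH]; first by rewrite big_nil.
have -> : block_words (a :: s) = block_word a ++ block_words s by [].
by rewrite word_eval_cat IH big_cons mulmxE.
Qed.

Theorem mainTheorem13 (n : nat) (hn : leq 2 n) (A B : 'M[R]_n) :
  exists P : ncpoly, ncpoly_nonzero P /\ nceval A B P = 0.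
Proof.
case: n hn A B => [//|n] _ A B.
pose m := (n.+1 * n.+1).+1.
pose w (s : 'S_m) := block_words [seq nat_of_ord (s k) | k <- index_enum 'I_m].
have w_inj : injective w.
  move=> s t /block_words_inj /eq_in_map eq_st; apply/permP => k.
  by apply: val_inj; apply: eq_st; rewrite mem_index_enum.
exists [seq ((-1) ^+ s, w s) | s : 'S_m <- index_enum {perm 'I_m}]; split.
  exists (w 1%g); rewrite /nccoef big_map /=.
  rewrite (eq_bigl (pred1 1%g)) => [|s]; last by rewrite /= inj_eq.
  by rewrite big_pred1_eq odd_perm1.
rewrite /nceval big_map.
rewrite -[RHS](@standard_eval_mx_eq0 _ n m (fun j => word_eval A B (block_word j))) //.
apply: eq_bigr => s _.
by rewrite intr_sign word_eval_block_words big_map.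
Qed.
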